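(* Let $\mathsf H$ be a horizontal connection on $\mathsf q_M$. Then for every $m\in M$, $\mathsf H(\mathsf d(m))$ lies in the image of $j_{\Omega(A)}\otimes_Aj_M:\Omega(A)\otimes_AM\to\mathsf T(A)\otimes_A\mathsf S_A(M)$; equivalently $(j_{\Omega(A)}\otimes_Aj_M)\circ(p_{\Omega(A)}\otimes_Ap_M)\circ\mathsf H\circ\mathsf d=\mathsf H\circ\mathsf d$ on $M$.
   Context: Fix a commutative ring $R$, a commutative $R$-algebra $A$ and an $A$-module $M$. ''Algebra'' means commutative $R$-algebra and ''algebra map'' means $R$-algebra homomorphism. $\Omega(A)$ is the $A$-module of Kähler differentials of $A$ over $R$, with universal derivation $\mathsf d:A\to\Omega(A)$. Tangent algebras: for an algebra $B$, $\mathsf T(B):=\mathrm{Sym}_B(\Omega(B))$, i.e. the $B$-algebra generated by symbols $\mathsf d(b)$ ($b\in B$) subject to $\mathsf d(b+b')=\mathsf d(b)+\mathsf d(b')$, $\mathsf d(bb')=b\,\mathsf d(b')+b'\,\mathsf d(b)$, $\mathsf d(r1)=0$ ($r\in R$). An algebra map out of $\mathsf T(B)$ is determined by its values on the generators $b$, $\mathsf d(b)$. Write $\mathsf T^2(B)=\mathsf T(\mathsf T(B))$ and denote the universal derivation $\mathsf T(B)\to\mathsf T^2(B)$ by $\mathsf d'$; so $\mathsf T^2(B)$ is generated over $B$ by $\mathsf d(b),\mathsf d'(b),\mathsf d'\mathsf d(b)$. For an algebra map $h:X\to Y$, $\mathsf T(h):\mathsf T(X)\to\mathsf T(Y)$ sends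 $x\mapsto h(x)$ and $\delta_X(x)\mapsto\delta_Y(h(x))$, where $\delta$ denotes the relevant universal derivation ($\mathsf d$ for $B\to\mathsf T(B)$, $\mathsf d'$ for $\mathsf T(B)\to\mathsf T^2(B)$). Algebra maps defined on generators $b\in B$: $\mathsf p_B:B\to\mathsf T(B)$ the inclusion; $0_B:\mathsf T(B)\to B$, $b\mapsto b$, $\mathsf d(b)\mapsto 0$; $\ell_B:\mathsf T^2(B)\to\mathsf T(B)$, $b\mapsto b$, $\mathsf d(b)\mapsto 0$, $\mathsf d'(b)\mapsto0$, $\mathsf d'\mathsf d(b)\mapsto\mathsf d(b)$; $\mathsf c_B:\mathsf T^2(B)\to\mathsf T^2(B)$, $b\mapsto b$, $\mathsf d(b)\mapsto\mathsf d'(b)$, $\mathsf d'(b)\mapsto\mathsf d(b)$, $\mathsf d'\mathsf d(b)\mapsto\mathsf d'\mathsf d(b)$. (These are, read in algebras, the structure maps of the Rosický tangent structure on affine schemes over $R$, i.e. on the opposite of the category of commutative $R$-algebras.) Differential bundle of $M$: $\mathsf S_A(M)$ is the symmetric $A$-algebra on $M$ (generated by $a\in A$, $m\in M$). Algebra maps: $\mathsf q_M:A\to\mathsf S_A(M)$ the inclusion; $\lambda_M:\mathsf T(\mathsf S_A(M))\to\mathsf S_A(M)$, $a\mapsto a$, $m\mapsto0$, $\mathsf d(a)\mapsto 0$, $\mathsf d(m)\mapsto m$. The maps $j_{\Omega(A)}:\Omega(A)\to\mathsf T(A)$, $j_M:M\to\mathsf S_A(M)$ are the inclusions of the degree-one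 summands and $p_{\Omega(A)}$, $p_M$ the projections onto them. A horizontal connection on $\mathsf q_M$ is an algebra map $\mathsf H:\mathsf T(\mathsf S_A(M))\to\mathsf T(A)\otimes_A\mathsf S_A(M)$ such that (H1) $\mathsf H(\mathsf T(\mathsf q_M)(w))=w\otimes1$ for all $w\in\mathsf T(A)$; (H2) $\mathsf H(v)=1\otimes v$ for all $v\in\mathsf S_A(M)$; (H3) $(\ell_A\otimes0_{\mathsf S_A(M)})\circ\theta\circ\mathsf T(\mathsf H)=\mathsf H\circ\ell_{\mathsf S_A(M)}$; (H4) $(0_{\mathsf T(A)}\otimes\lambda_M)\circ\theta\circ\mathsf T(\mathsf H)=\mathsf H\circ\mathsf T(\lambda_M)\circ\mathsf c_{\mathsf S_A(M)}$. Here $\mathsf T^2(A)\otimes_{\mathsf T(A)}\mathsf T(\mathsf S_A(M))$ is formed via $\mathsf T(\mathsf p_A):\mathsf T(A)\to\mathsf T^2(A)$ ($a\mapsto a$, $\mathsf d(a)\mapsto\mathsf d'(a)$) and $\mathsf T(\mathsf q_M)$; $\theta:\mathsf T(\mathsf T(A)\otimes_A\mathsf S_A(M))\to\mathsf T^2(A)\otimes_{\mathsf T(A)}\mathsf T(\mathsf S_A(M))$ is the canonical isomorphism, $w\otimes v\mapsto w\otimes v$, $\mathsf d(w\otimes v)\mapsto\mathsf d'(w)\otimes v+w\otimes\mathsf d(v)$; the maps $\ell_A\otimes0_{\mathsf S_A(M)}$ and $0_{\mathsf T(A)}\otimes\lambda_M$ into $\mathsf T(A)\otimes_A\mathsf S_A(M)$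 are induced factorwise, where $0_{\mathsf T(A)}:\mathsf T^2(A)\to\mathsf T(A)$ sends $a\mapsto a$, $\mathsf d(a)\mapsto\mathsf d(a)$, $\mathsf d'(a)\mapsto0$, $\mathsf d'\mathsf d(a)\mapsto0$. *)

(* Commutative R-algebras, Kaehler/tangent algebras, symmetric
   algebras and tensor products of algebras are not in MathComp; they are
   specified here by their universal properties (which determine them up to
   unique isomorphism). *)
From HB Require Import structures.
From mathcomp Require Import all_boot all_order all_algebra.
Set Implicit Arguments. Unset Strict Implicit. Unset Printing Implicit Defensive.
Import GRing.Theory.
Local Open Scope ring_scope.

Definition is_ringmor (X Y : pzRingType) (f : X -> Y) : Prop :=
  (forall x y, f (x + y) = f x + f y) /\
  (forall x y, f (x * y) = f x * f y) /\ f 1 = 1.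

Record alg (R : comPzRingType) := Alg {
  alg_car :> comPzRingType;
  alg_str : R -> alg_car;
  alg_strP : is_ringmor alg_str }.

Section Defs.
Variable R : comPzRingType.

Definition is_algmap (X Y : alg R) (f : X -> Y) : Prop :=
  is_ringmor f /\ (forall r, f (alg_str X r) = alg_str Y r).

Definition is_der (X Y : alg R) (f D : X -> Y) : Prop :=
  (forall x y, D (x + y) = D x + D y) /\
  (forall x y, D (x * y) = f x * D y + f y * D x) /\
  (forall r, D (alg_str X r) = 0).

(* (T, p, d) is the tangent algebra T(B) = Sym_B(Omega(B)) of B, with
   inclusion p = p_B and universal derivation d : B -> T(B). *)
Definition is_tangent (B T : alg R) (p d : B -> T) : Prop :=
  is_algmap p /\ is_der p d /\
  forall (C : alg R) (f D : B -> C), is_algmap f -> is_der f D ->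
    exists g : T -> C,
      (is_algmap g /\ (forall b, g (p b) = f b) /\ (forall b, g (d b) = D b)) /\
      (forall g' : T -> C,
         is_algmap g' -> (forall b, g' (p b) = f b) -> (forall b, g' (d b) = D b) ->
         forall t, g' t = g t).

(* (S, q, j) is the symmetric A-algebra S_A(M) on the A-module M, with
   q = q_M : A -> S_A(M) and j = j_M : M -> S_A(M) the inclusions. *)
Definition is_symalg (A S : alg R) (M : lmodType A) (q : A -> S) (j : M -> S)
  : Prop :=
  is_algmap q /\ (forall m m', j (m + m') = j m + j m') /\
  (forall (a : A) (m : M), j (a *: m) = q a * j m) /\
  forall (C : alg R) (f : A -> C) (g : M -> C), is_algmap f ->
    (forall m m', g (m + m') = g m + g m') ->
    (forall (a : A) (m : M), g (a *: m) = f a * g m) ->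
    exists h : S -> C,
      (is_algmap h /\ (forall a, h (q a) = f a) /\ (forall m, h (j m) = g m)) /\
      (forall h' : S -> C,
         is_algmap h' -> (forall a, h' (q a) = f a) -> (forall m, h' (j m) = g m) ->
         forall s, h' s = h s).

(* (P, ix, iy) is the tensor product X (x)_Z Y of commutative R-algebras
   formed via u : Z -> X and v : Z -> Y (the pushout); x (x) y = ix x * iy y. *)
Definition is_tensor (Z X Y P : alg R) (u : Z -> X) (v : Z -> Y)
  (ix : X -> P) (iy : Y -> P) : Prop :=
  is_algmap ix /\ is_algmap iy /\ (forall z, ix (u z) = iy (v z)) /\
  forall (C : alg R) (a : X -> C) (b : Y -> C), is_algmap a -> is_algmap b ->
    (forall z, a (u z) = b (v z)) ->
    exists h : P -> C,
      (is_algmap h /\ (forall x, h (ix x) = a x) /\ (forall y, h (iy y) = b y)) /\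
      (forall h' : P -> C,
         is_algmap h' -> (forall x, h' (ix x) = a x) -> (forall y, h' (iy y) = b y) ->
         forall t, h' t = h t).

End Defs.

From HB Require Import structures.
From mathcomp Require Import all_boot all_order all_algebra.
From Stdlib Require Import ClassicalDescription.
Set Implicit Arguments. Unset Strict Implicit. Unset Printing Implicit Defensive.
Import GRing.Theory.
Local Open Scope ring_scope.

(* Put x := H(d(j m)).  Read on d'd(j m), axiom (H3) says that x is fixed by
   G1 := (l_A (x) 0) o theta o d, and (H4) that x is fixed by
   G2 := (0 (x) lambda) o theta o d.  On pure tensors
   G1 (w (x) v) = l_A(d'w) (x) v  and  G2 (w (x) v) = w (x) lambda(d v),
   where l_A(d'w) lies in the span of the a d(b), i.e. in the image of Omega(A),
   and lambda(d v) lies in j_M(M).  Writing x as a sum of pure tensors, x = G2 (G1 x)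
   therefore lies in the span of the a d(b) (x) j_M(m).
   The span and image facts are proved by induction on generators: a property
   closed under the R-algebra operations and true on the generators of a tangent
   algebra, a symmetric algebra or a tensor product holds everywhere, since the
   universal property yields a map into the corresponding subalgebra which, by
   uniqueness, is a section of the inclusion. *)

Section AdditiveMorph.
Variables (X Y : zmodType) (f : X -> Y).
Hypothesis fD : {morph f : x y / x + y}.

Lemma morphD0 : f 0 = 0.
Proof. by apply: (addrI (f 0)); rewrite -fD !addr0. Qed.

Lemma morphDN : {morph f : x / - x}.
Proof. by move=> x; apply: (addrI (f x)); rewrite -fD !subrr morphD0. Qed.

Lemma morphDB : {morph f : x y / x - y}.
Proof. by move=> x y; rewrite fD morphDN. Qed.

End AdditiveMorph.

Section AlgebraMaps.
Variable R : comPzRingType.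

Section Laws.
Variables (X Y : alg R) (f D : X -> Y).

Lemma algmapD : is_algmap f -> {morph f : x y / x + y}.
Proof. by case=> -[]. Qed.

Lemma algmapM : is_algmap f -> {morph f : x y / x * y}.
Proof. by case=> -[_ []]. Qed.

Lemma algmap1 : is_algmap f -> f 1 = 1.
Proof. by case=> -[_ []]. Qed.

Lemma algmap_str : is_algmap f -> forall r, f (alg_str X r) = alg_str Y r.
Proof. by case. Qed.

Lemma algmap0 : is_algmap f -> f 0 = 0.
Proof. by move=> fA; apply/morphD0/algmapD. Qed.

Lemma algmapN : is_algmap f -> {morph f : x / - x}.
Proof. by move=> fA; apply/morphDN/algmapD. Qed.

Lemma algmapB : is_algmap f -> {morph f : x y / x - y}.
Proof. by move=> fA; apply/morphDB/algmapD. Qed.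

Lemma derD : is_der f D -> {morph D : x y / x + y}.
Proof. by case. Qed.

End Laws.

Lemma id_algmap (X : alg R) : is_algmap (fun x : X => x).
Proof. by do !split. Qed.

Lemma algmap_comp (X Y Z : alg R) (f : X -> Y) (g : Y -> Z) :
  is_algmap g -> is_algmap f -> is_algmap (g \o f).
Proof.
move=> gA fA; split; [split; [|split]|] => /= [x y|x y||r].
- by rewrite (algmapD fA) (algmapD gA).
- by rewrite (algmapM fA) (algmapM gA).
- by rewrite (algmap1 fA) (algmap1 gA).
- by rewrite (algmap_str fA) (algmap_str gA).
Qed.

Lemma algmap_comp_der (X Y Z : alg R) (f D : X -> Y) (g : Y -> Z) :
  is_algmap g -> is_der f D -> is_der (g \o f) (g \o D).
Proof.
move=> gA [DD [DM D0]]; split; [|split] => /= [x y|x y|r].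
- by rewrite DD (algmapD gA).
- by rewrite DM (algmapD gA) !(algmapM gA).
- by rewrite D0 (algmap0 gA).
Qed.

Definition is_subalg (X : alg R) (S : X -> Prop) : Prop :=
  (forall r, S (alg_str X r)) /\ (forall x y, S x -> S y -> S (x - y)) /\
  (forall x y, S x -> S y -> S (x * y)).

Lemma algmap_image_subalg (X Y : alg R) (f : Y -> X) :
  is_algmap f -> is_subalg (fun x => exists y, x = f y).
Proof.
move=> fA; split; [|split].
- by move=> r; exists (alg_str Y r); rewrite (algmap_str fA).
- by move=> _ _ [y ->] [y' ->]; exists (y - y'); rewrite (algmapB fA).
- by move=> _ _ [y ->] [y' ->]; exists (y * y'); rewrite (algmapM fA).
Qed.

Lemma der_subalg (X Y : alg R) (f D : X -> Y) (S N : Y -> Prop) :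
  is_algmap f -> is_der f D -> is_subalg S ->
  N 0 -> (forall y z, N y -> N z -> N (y - z)) ->
  (forall s y, S s -> N y -> N (s * y)) ->
  is_subalg (fun x => S (f x) /\ N (D x)).
Proof.
move=> fA [DD [DM D0]] [S_str [SB SM]] N0 NB NS.
have ND y z : N y -> N z -> N (y + z).
  move=> Ny Nz; have -> : y + z = y - (0 - z) by rewrite sub0r opprK.
  exact: NB Ny (NB _ _ N0 Nz).
split; [|split].
- by move=> r; rewrite (algmap_str fA) D0.
- move=> x y [Sx Nx] [Sy Ny]; rewrite (algmapB fA) (morphDB DD).
  by split; [apply: SB | apply: NB].
- move=> x y [Sx Nx] [Sy Ny]; rewrite (algmapM fA) DM.
  by split; [apply: SM | apply: ND; apply: NS].
Qed.

End AlgebraMaps.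

(* Subtypes need a boolean predicate; [S] is decided classically. *)
Definition pred_of_prop (T : Type) (S : T -> Prop) : pred T :=
  fun x => if excluded_middle_informative (S x) then true else false.

Lemma pred_of_propP (T : Type) (S : T -> Prop) x : reflect (S x) (pred_of_prop S x).
Proof. by rewrite /pred_of_prop; case: excluded_middle_informative; constructor. Qed.

Lemma subalg_subring_closed (R : comPzRingType) (X : alg R) (S : X -> Prop) :
  is_subalg S -> subring_closed (pred_of_prop S).
Proof.
case=> S_str [SB SM]; split.
- by apply/pred_of_propP; rewrite -(alg_strP X).2.2; apply: S_str.
- by move=> x y /pred_of_propP Sx /pred_of_propP Sy; apply/pred_of_propP/SB.
- by move=> x y /pred_of_propP Sx /pred_of_propP Sy; apply/pred_of_propP/SM.
Qed.

Definition subalg_car (R : comPzRingType) (X : alg R) (S : X -> Prop)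
  (cS : is_subalg S) := {x : X | pred_of_prop S x}.

HB.instance Definition _ (R : comPzRingType) (X : alg R) (S : X -> Prop)
  (cS : is_subalg S) :=
  [isSub of @subalg_car R X S cS for @sval X (pred_of_prop S)].
HB.instance Definition _ (R : comPzRingType) (X : alg R) (S : X -> Prop)
  (cS : is_subalg S) := [Choice of @subalg_car R X S cS by <:].
HB.instance Definition _ (R : comPzRingType) (X : alg R) (S : X -> Prop)
  (cS : is_subalg S) :=
  GRing.SubChoice_isSubComPzRing.Build X (pred_of_prop S) (@subalg_car R X S cS)
    (subalg_subring_closed cS).

Section Subalgebra.
Variables (R : comPzRingType) (X : alg R) (S : X -> Prop) (cS : is_subalg S).

Definition subalg_in x (Sx : S x) : subalg_car cS :=
  exist _ x (introT (pred_of_propP S x) Sx).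

Lemma subalg_str_ringmor : is_ringmor (fun r => subalg_in (cS.1 r)).
Proof.
split; [|split] => [r r'|r r'|]; apply: val_inj => /=.
- exact: (alg_strP X).1.
- exact: (alg_strP X).2.1.
- exact: (alg_strP X).2.2.
Qed.

Definition subalg : alg R := @Alg R (subalg_car cS) _ subalg_str_ringmor.

Lemma subalg_valP (u : subalg) : S (val u).
Proof. exact/pred_of_propP/valP. Qed.

Lemma val_algmap : is_algmap (fun u : subalg => val u).
Proof. by do !split. Qed.

Lemma lift_algmap (Y : alg R) (f : Y -> X) (Sf : forall y, S (f y)) :
  is_algmap f -> is_algmap (fun y => subalg_in (Sf y) : subalg).
Proof.
move=> fA; split; [split; [|split]|] => [y y'|y y'||r]; apply: val_inj => /=.
- exact: (algmapD fA).
- exact: (algmapM fA).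
- exact: (algmap1 fA).
- exact: (algmap_str fA).
Qed.

Lemma lift_der (Y : alg R) (f D : Y -> X) (Sf : forall y, S (f y))
  (SD : forall y, S (D y)) :
  is_der f D -> is_der (fun y => subalg_in (Sf y) : subalg) (fun y => subalg_in (SD y)).
Proof.
case=> DD [DM D0]; split; [|split] => [y y'|y y'|r]; apply: val_inj => /=.
- exact: DD.
- exact: DM.
- exact: D0.
Qed.

End Subalgebra.

Section Generation.
Variable R : comPzRingType.

Lemma tangent_algmap_ext (X T C : alg R) (p d : X -> T) (g g' : T -> C) :
  is_tangent p d -> is_algmap g -> is_algmap g' ->
  (forall x, g (p x) = g' (p x)) -> (forall x, g (d x) = g' (d x)) -> g =1 g'.
Proof.
move=> [pA [dD univ]] gA g'A ep ed.
have [h [_ h_uniq]] := univ C _ _ (algmap_comp gA pA) (algmap_comp_der gA dD).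
move=> t; rewrite (h_uniq g gA (fun=> erefl) (fun=> erefl)).
by rewrite (h_uniq g' g'A (fun x => esym (ep x)) (fun x => esym (ed x))).
Qed.

Lemma tangent_ind (X T : alg R) (p d : X -> T) (S : T -> Prop) (cS : is_subalg S) :
  is_tangent p d -> (forall x, S (p x)) -> (forall x, S (d x)) -> forall t, S t.
Proof.
move=> HT Sp Sd; have [pA [dD univ]] := HT.
have [g [[gA [gp gd]] _]] :=
  univ (subalg cS) _ _ (lift_algmap cS Sp pA) (lift_der cS Sp Sd dD).
have val_g : forall t, val (g t) = t.
  apply: (tangent_algmap_ext HT (algmap_comp (val_algmap cS) gA) (id_algmap T)).
  - by move=> x /=; rewrite gp.
  - by move=> x /=; rewrite gd.
by move=> t; rewrite -(val_g t); apply: subalg_valP.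
Qed.

Lemma symalg_algmap_ext (A S C : alg R) (M : lmodType A) (q : A -> S) (j : M -> S)
  (g g' : S -> C) :
  is_symalg q j -> is_algmap g -> is_algmap g' ->
  (forall a, g (q a) = g' (q a)) -> (forall m, g (j m) = g' (j m)) -> g =1 g'.
Proof.
move=> [qA [jD [jZ univ]]] gA g'A eq ej.
have gjD : {morph g \o j : m m' / m + m'} by move=> m m' /=; rewrite jD (algmapD gA).
have gjZ a m : (g \o j) (a *: m) = (g \o q) a * (g \o j) m.
  by rewrite /= jZ (algmapM gA).
have [h [_ h_uniq]] := univ C _ _ (algmap_comp gA qA) gjD gjZ.
move=> s; rewrite (h_uniq g gA (fun=> erefl) (fun=> erefl)).
by rewrite (h_uniq g' g'A (fun a => esym (eq a)) (fun m => esym (ej m))).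
Qed.

Lemma symalg_ind (A S : alg R) (M : lmodType A) (q : A -> S) (j : M -> S)
  (P : S -> Prop) (cP : is_subalg P) :
  is_symalg q j -> (forall a, P (q a)) -> (forall m, P (j m)) -> forall s, P s.
Proof.
move=> HS Pq Pj; have [qA [jD [jZ univ]]] := HS.
have gD m m' : (subalg_in cP (Pj (m + m')) : subalg cP) =
               subalg_in cP (Pj m) + subalg_in cP (Pj m').
  by apply: val_inj; rewrite /= jD.
have gZ a m : (subalg_in cP (Pj (a *: m)) : subalg cP) =
              subalg_in cP (Pq a) * subalg_in cP (Pj m).
  by apply: val_inj; rewrite /= jZ.
have [g [[gA [gq gj]] _]] := univ (subalg cP) _ _ (lift_algmap cP Pq qA) gD gZ.
have val_g : forall s, val (g s) = s.
  apply: (symalg_algmap_ext HS (algmap_comp (val_algmap cP) gA) (id_algmap S)).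
  - by move=> a /=; rewrite gq.
  - by move=> m /=; rewrite gj.
by move=> s; rewrite -(val_g s); apply: subalg_valP.
Qed.

Lemma tensor_algmap_ext (Z X Y P C : alg R) (u : Z -> X) (v : Z -> Y)
  (ix : X -> P) (iy : Y -> P) (g g' : P -> C) :
  is_tensor u v ix iy -> is_algmap g -> is_algmap g' ->
  (forall x, g (ix x) = g' (ix x)) -> (forall y, g (iy y) = g' (iy y)) -> g =1 g'.
Proof.
move=> [ixA [iyA [ixy univ]]] gA g'A ex ey.
have gxy z : (g \o ix) (u z) = (g \o iy) (v z) by rewrite /= ixy.
have [h [_ h_uniq]] := univ C _ _ (algmap_comp gA ixA) (algmap_comp gA iyA) gxy.
move=> t; rewrite (h_uniq g gA (fun=> erefl) (fun=> erefl)).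
by rewrite (h_uniq g' g'A (fun x => esym (ex x)) (fun y => esym (ey y))).
Qed.

Lemma tensor_ind (Z X Y P : alg R) (u : Z -> X) (v : Z -> Y) (ix : X -> P) (iy : Y -> P)
  (S : P -> Prop) (cS : is_subalg S) :
  is_tensor u v ix iy -> (forall x, S (ix x)) -> (forall y, S (iy y)) -> forall t, S t.
Proof.
move=> HP Sx Sy; have [ixA [iyA [ixy univ]]] := HP.
have gxy z : (subalg_in cS (Sx (u z)) : subalg cS) = subalg_in cS (Sy (v z)).
  by apply: val_inj; rewrite /= ixy.
have [g [[gA [gx gy]] _]] :=
  univ (subalg cS) _ _ (lift_algmap cS Sx ixA) (lift_algmap cS Sy iyA) gxy.
have val_g : forall t, val (g t) = t.
  apply: (tensor_algmap_ext HP (algmap_comp (val_algmap cS) gA) (id_algmap P)).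
  - by move=> x /=; rewrite gx.
  - by move=> y /=; rewrite gy.
by move=> t; rewrite -(val_g t); apply: subalg_valP.
Qed.

End Generation.

Definition sum_span (I : Type) (X : zmodType) (F : I -> X) (x : X) : Prop :=
  exists s : seq I, x = \sum_(i <- s) F i.

Lemma sum_span0 (I : Type) (X : zmodType) (F : I -> X) : sum_span F 0.
Proof. by exists [::]; rewrite big_nil. Qed.

Lemma sum_span_gen (I : Type) (X : zmodType) (F : I -> X) i : sum_span F (F i).
Proof. by exists [:: i]; rewrite big_seq1. Qed.

Lemma sum_spanD (I : Type) (X : zmodType) (F : I -> X) x y :
  sum_span F x -> sum_span F y -> sum_span F (x + y).
Proof. by move=> [s ->] [s' ->]; exists (s ++ s'); rewrite big_cat. Qed.

Lemma sum_span_morph (I J : Type) (X Y : zmodType) (F : I -> X) (G : J -> Y)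
  (g : X -> Y) :
  {morph g : x y / x + y} -> (forall i, sum_span G (g (F i))) ->
  forall x, sum_span F x -> sum_span G (g x).
Proof.
move=> gD gF x [s ->]; rewrite (big_morph g gD (morphD0 gD)).
elim: s => [|i s IH]; first by rewrite big_nil; apply: sum_span0.
by rewrite big_cons; apply: sum_spanD.
Qed.

Lemma sum_spanB (I : Type) (X : zmodType) (F : I -> X) :
  (forall i, sum_span F (- F i)) ->
  forall x y, sum_span F x -> sum_span F y -> sum_span F (x - y).
Proof.
move=> FN x y Fx Fy; apply: sum_spanD => //.
exact: (sum_span_morph (g := -%R) (@opprD X) FN Fy).
Qed.

Lemma sum_spanM (I : Type) (X : pzRingType) (F : I -> X) :
  (forall i j, sum_span F (F i * F j)) ->
  forall x y, sum_span F x -> sum_span F y -> sum_span F (x * y).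
Proof.
move=> FM x y Fx Fy; apply: (sum_span_morph (g := fun a => a * y) _ _ Fx).
  by move=> a b; rewrite mulrDl.
move=> i; apply: (sum_span_morph (g := fun b => F i * b) _ _ Fy) => //.
by move=> a b; rewrite mulrDr.
Qed.

Section StructureMaps.
Variable R : comPzRingType.

Lemma tensor_sum_span (Z X Y P : alg R) (u : Z -> X) (v : Z -> Y)
  (ix : X -> P) (iy : Y -> P) :
  is_tensor u v ix iy -> forall t, sum_span (fun xy : X * Y => ix xy.1 * iy xy.2) t.
Proof.
move=> HP; have [ixA [iyA _]] := HP.
set F := fun xy : X * Y => ix xy.1 * iy xy.2.
have cS : is_subalg (sum_span F).
  split; [|split].
  - move=> r; rewrite -[alg_str P r]mulr1 -(algmap1 iyA) -(algmap_str ixA r).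
    exact: (sum_span_gen F (alg_str X r, 1)).
  - apply: sum_spanB => -[x y]; rewrite /F /= -mulNr -(algmapN ixA).
    exact: (sum_span_gen F (- x, y)).
  - apply: sum_spanM => -[x y] [x' y']; rewrite /F /= mulrACA.
    by rewrite -(algmapM ixA) -(algmapM iyA); apply: (sum_span_gen F (x * x', y * y')).
apply: (tensor_ind cS HP) => [x|y].
- rewrite -[ix x]mulr1 -(algmap1 iyA); exact: (sum_span_gen F (x, 1)).
- rewrite -[iy y]mul1r -(algmap1 ixA); exact: (sum_span_gen F (1, y)).
Qed.

Lemma tangent_zero_section (X T T2 : alg R) (p d : X -> T) (p' d' : T -> T2)
  (z : T2 -> T) :
  is_tangent p d -> is_tangent p' d' ->
  is_algmap z /\ (forall x, z (p' (p x)) = p x) /\ (forall x, z (p' (d x)) = d x) /\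
    (forall x, z (d' (p x)) = 0) /\ (forall x, z (d' (d x)) = 0) ->
  forall t, z (p' t) = t /\ z (d' t) = 0.
Proof.
move=> HT [p'A [d'D _]] [zA [zpp [zpd [zdp zdd]]]] t; split.
  by apply: (tangent_algmap_ext HT (algmap_comp zA p'A) (id_algmap T)).
have cS : is_subalg (fun t => True /\ (z \o d') t = 0).
  apply: (der_subalg (S := fun _ => True) (N := fun y => y = 0)
            (algmap_comp zA p'A) (algmap_comp_der zA d'D)) => //.
  - by move=> y y' -> ->; rewrite subr0.
  - by move=> s y _ ->; rewrite mulr0.
exact: (tangent_ind cS HT (fun x => conj I (zdp x)) (fun x => conj I (zdd x)) t).2.
Qed.

Lemma vertical_lift_d_span (X T T2 : alg R) (p d : X -> T) (p' d' : T -> T2)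
  (l : T2 -> T) :
  is_tangent p d -> is_tangent p' d' ->
  is_algmap l /\ (forall x, l (p' (p x)) = p x) /\ (forall x, l (p' (d x)) = 0) /\
    (forall x, l (d' (p x)) = 0) /\ (forall x, l (d' (d x)) = d x) ->
  forall t, sum_span (fun ab : X * X => p ab.1 * d ab.2) (l (d' t)).
Proof.
move=> HT [p'A [d'D _]] [lA [lpp [lpd [ldp ldd]]]] t.
have [pA _] := HT.
set F := fun ab : X * X => p ab.1 * d ab.2.
have cS : is_subalg (fun t => (exists x, (l \o p') t = p x) /\ sum_span F ((l \o d') t)).
  apply: (der_subalg (algmap_comp lA p'A) (algmap_comp_der lA d'D)
            (algmap_image_subalg pA) (sum_span0 F)).
  - apply: sum_spanB => -[a b]; rewrite /F /= -mulNr -(algmapN pA).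
    exact: (sum_span_gen F (- a, b)).
  - move=> _ y [c ->]; apply: (sum_span_morph (g := fun u => p c * u)).
      by move=> u u'; rewrite mulrDr.
    move=> [a b]; rewrite /F /= mulrA -(algmapM pA).
    exact: (sum_span_gen F (c * a, b)).
have gen_p x : (exists a, l (p' (p x)) = p a) /\ sum_span F (l (d' (p x))).
  by split; [exists x | rewrite ldp; apply: sum_span0].
have gen_d x : (exists a, l (p' (d x)) = p a) /\ sum_span F (l (d' (d x))).
  split; first by exists 0; rewrite lpd (algmap0 pA).
  by rewrite ldd -[d x]mul1r -(algmap1 pA); apply: (sum_span_gen F (1, x)).
exact: (tangent_ind cS HT gen_p gen_d t).2.
Qed.

Lemma bundle_lift_d_image (A S TS : alg R) (M : lmodType A) (q : A -> S) (j : M -> S)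
  (pS dS : S -> TS) (lam : TS -> S) :
  is_symalg q j -> is_tangent pS dS ->
  is_algmap lam /\ (forall a, lam (pS (q a)) = q a) /\ (forall m, lam (pS (j m)) = 0) /\
    (forall a, lam (dS (q a)) = 0) /\ (forall m, lam (dS (j m)) = j m) ->
  forall v, exists m, lam (dS v) = j m.
Proof.
move=> HS [pA [dD _]] [lamA [lpq [lpj [ldq ldj]]]] v.
have [qA [jD [jZ _]]] := HS.
have cS : is_subalg (fun v =>
    (exists a, (lam \o pS) v = q a) /\ (exists m, (lam \o dS) v = j m)).
  apply: (der_subalg (N := fun y => exists m, y = j m)
            (algmap_comp lamA pA) (algmap_comp_der lamA dD) (algmap_image_subalg qA)).
  - by exists 0; rewrite (morphD0 jD).
  - by move=> _ _ [m ->] [m' ->]; exists (m - m'); rewrite (morphDB jD).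
  - by move=> _ _ [a ->] [m ->]; exists (a *: m); rewrite jZ.
have gen_q a : (exists a', lam (pS (q a)) = q a') /\ (exists m, lam (dS (q a)) = j m).
  by split; [exists a | exists 0; rewrite ldq (morphD0 jD)].
have gen_j m : (exists a, lam (pS (j m)) = q a) /\ (exists m', lam (dS (j m)) = j m').
  by split; [exists 0; rewrite lpj (algmap0 qA) | exists m].
exact: (symalg_ind cS HS gen_q gen_j v).2.
Qed.

End StructureMaps.

Unset Implicit Arguments.

Theorem mainTheorem6
  (R : comPzRingType) (A : alg R) (M : lmodType A)
  (* T(A), with p_A and d *)
  (TA : alg R) (pA dA : A -> TA) (HTA : is_tangent pA dA)
  (* S_A(M), with q_M and j_M *)
  (SM : alg R) (q : A -> SM) (jM : M -> SM) (HSM : is_symalg q jM)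
  (* T(S_A(M)), with p_{S_A(M)} and d *)
  (TS : alg R) (pS dS : SM -> TS) (HTS : is_tangent pS dS)
  (* P = T(A) (x)_A S_A(M), formed via p_A and q_M *)
  (P : alg R) (ix1 : TA -> P) (iy1 : SM -> P) (HP : is_tensor pA q ix1 iy1)
  (* T^2(A) = T(T(A)), with inclusion and d' *)
  (T2A : alg R) (pA' dA' : TA -> T2A) (HT2A : is_tangent pA' dA')
  (* T^2(S_A(M)) *)
  (T2S : alg R) (pS' dS' : TS -> T2S) (HT2S : is_tangent pS' dS')
  (* T(P) *)
  (TP : alg R) (pP dP : P -> TP) (HTP : is_tangent pP dP)
  (* T(q_M) *)
  (Tq : TA -> TS)
  (HTq : is_algmap Tq /\ (forall a, Tq (pA a) = pS (q a)) /\
         (forall a, Tq (dA a) = dS (q a)))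
  (* T(p_A) *)
  (TpA : TA -> T2A)
  (HTpA : is_algmap TpA /\ (forall a, TpA (pA a) = pA' (pA a)) /\
          (forall a, TpA (dA a) = dA' (pA a)))
  (* Q = T^2(A) (x)_{T(A)} T(S_A(M)), formed via T(p_A) and T(q_M) *)
  (Q : alg R) (ix2 : T2A -> Q) (iy2 : TS -> Q) (HQ : is_tensor TpA Tq ix2 iy2)
  (* theta *)
  (theta : TP -> Q)
  (Htheta : is_algmap theta /\
     (forall (w : TA) (v : SM),
        theta (pP (ix1 w * iy1 v)) = ix2 (pA' w) * iy2 (pS v)) /\
     (forall (w : TA) (v : SM),
        theta (dP (ix1 w * iy1 v)) =
          ix2 (dA' w) * iy2 (pS v) + ix2 (pA' w) * iy2 (dS v)))
  (* ell_A *)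
  (ellA : T2A -> TA)
  (HellA : is_algmap ellA /\
     (forall a, ellA (pA' (pA a)) = pA a) /\ (forall a, ellA (pA' (dA a)) = 0) /\
     (forall a, ellA (dA' (pA a)) = 0) /\ (forall a, ellA (dA' (dA a)) = dA a))
  (* ell_{S_A(M)} *)
  (ellS : T2S -> TS)
  (HellS : is_algmap ellS /\
     (forall b, ellS (pS' (pS b)) = pS b) /\ (forall b, ellS (pS' (dS b)) = 0) /\
     (forall b, ellS (dS' (pS b)) = 0) /\ (forall b, ellS (dS' (dS b)) = dS b))
  (* 0_{S_A(M)} *)
  (zS : TS -> SM)
  (HzS : is_algmap zS /\ (forall b, zS (pS b) = b) /\ (forall b, zS (dS b) = 0))
  (* 0_{T(A)} *)
  (zTA : T2A -> TA)
  (HzTA : is_algmap zTA /\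
     (forall a, zTA (pA' (pA a)) = pA a) /\ (forall a, zTA (pA' (dA a)) = dA a) /\
     (forall a, zTA (dA' (pA a)) = 0) /\ (forall a, zTA (dA' (dA a)) = 0))
  (* lambda_M *)
  (lam : TS -> SM)
  (Hlam : is_algmap lam /\
     (forall a, lam (pS (q a)) = q a) /\ (forall m, lam (pS (jM m)) = 0) /\
     (forall a, lam (dS (q a)) = 0) /\ (forall m, lam (dS (jM m)) = jM m))
  (* c_{S_A(M)} *)
  (cS : T2S -> T2S)
  (HcS : is_algmap cS /\
     (forall b, cS (pS' (pS b)) = pS' (pS b)) /\
     (forall b, cS (pS' (dS b)) = dS' (pS b)) /\
     (forall b, cS (dS' (pS b)) = pS' (dS b)) /\
     (forall b, cS (dS' (dS b)) = dS' (dS b)))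
  (* T(lambda_M) *)
  (Tlam : T2S -> TS)
  (HTlam : is_algmap Tlam /\ (forall x, Tlam (pS' x) = pS (lam x)) /\
           (forall x, Tlam (dS' x) = dS (lam x)))
  (* ell_A (x) 0_{S_A(M)} *)
  (L1 : Q -> P)
  (HL1 : is_algmap L1 /\ (forall x, L1 (ix2 x) = ix1 (ellA x)) /\
         (forall y, L1 (iy2 y) = iy1 (zS y)))
  (* 0_{T(A)} (x) lambda_M *)
  (L2 : Q -> P)
  (HL2 : is_algmap L2 /\ (forall x, L2 (ix2 x) = ix1 (zTA x)) /\
         (forall y, L2 (iy2 y) = iy1 (lam y)))
  (* the horizontal connection H and T(H) *)
  (H : TS -> P) (HH : is_algmap H)
  (TH : T2S -> TP)
  (HTH : is_algmap TH /\ (forall x, TH (pS' x) = pP (H x)) /\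
         (forall x, TH (dS' x) = dP (H x)))
  (H1 : forall w : TA, H (Tq w) = ix1 w * iy1 1)
  (H2 : forall v : SM, H (pS v) = ix1 1 * iy1 v)
  (H3 : forall z : T2S, L1 (theta (TH z)) = H (ellS z))
  (H4 : forall z : T2S, L2 (theta (TH z)) = H (Tlam (cS z))) :
  forall m : M, exists s : seq ((A * A) * M),
    H (dS (jM m)) =
      \sum_(t <- s) ix1 (pA t.1.1 * dA t.1.2) * iy1 (jM t.2).
Proof.
move=> m; set x := H (dS (jM m)).
have [thetaA [_ thetaD]] := Htheta.
have [_ [dPD _]] := HTP.
have [L1A [L1ix L1iy]] := HL1.
have [L2A [L2ix L2iy]] := HL2.
have [ix1A [iy1A _]] := HP.
have G1_tensor w v : L1 (theta (dP (ix1 w * iy1 v))) = ix1 (ellA (dA' w)) * iy1 v.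
  rewrite thetaD (algmapD L1A) !(algmapM L1A) !L1ix !L1iy HzS.2.1 HzS.2.2.
  by rewrite (algmap0 iy1A) mulr0 addr0.
have G2_tensor w v : L2 (theta (dP (ix1 w * iy1 v))) = ix1 w * iy1 (lam (dS v)).
  have [zp zd] := tangent_zero_section HTA HT2A HzTA w.
  rewrite thetaD (algmapD L2A) !(algmapM L2A) !L2ix !L2iy zp zd.
  by rewrite (algmap0 ix1A) mul0r add0r.
have G1_x : L1 (theta (dP x)) = x.
  by have := H3 (dS' (dS (jM m))); rewrite HTH.2.2 HellS.2.2.2.2.
have G2_x : L2 (theta (dP x)) = x.
  by have := H4 (dS' (dS (jM m))); rewrite HTH.2.2 HcS.2.2.2.2 HTlam.2.2 Hlam.2.2.2.2.
change (sum_span (fun t : (A * A) * M => ix1 (pA t.1.1 * dA t.1.2) * iy1 (jM t.2)) x).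
rewrite -G2_x -G1_x.
apply: (sum_span_morph (g := fun y => L2 (theta (dP (L1 (theta (dP y))))))
          _ _ (tensor_sum_span HP x)).
  by move=> y y'; rewrite !(derD dPD, algmapD thetaA, algmapD L1A, algmapD L2A).
move=> [w v] /=; rewrite G1_tensor G2_tensor.
have [m' ->] := bundle_lift_d_image HSM HTS Hlam v.
apply: (sum_span_morph (g := fun u => ix1 u * iy1 (jM m'))
          _ _ (vertical_lift_d_span HTA HT2A HellA w)).
  by move=> u u'; rewrite (algmapD ix1A) mulrDl.
by move=> [a b]; apply: (sum_span_gen _ ((a, b), m')).
Qed.
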